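(* Let $G$ be a graph with vertex order $v_1,\ldots,v_n$, let $D$ be a minimal dominating set of $G$, let $u,w\in D$ be adjacent, and let $v\in P_D(u)$. Let $X_{uv}$, $D'$, $D^*$ and $Z_{uv}$ be as defined in the context. Then $D^*$ is a minimal dominating set of $G$, $X_{uv}\cup\{v\}\subseteq D^*$, $|E(G[D^*])|<|E(G[D])|$, and $v$ is an isolated vertex of $G[D^*]$.
   Context: Graphs are finite, simple, undirected; $N(x)$ is the open and $N[x]=N(x)\cup\{x\}$ the closed neighborhood, $N[S]=\bigcup_{x\in S}N[x]$. A dominating set is $D\subseteq V(G)$ with $N[D]=V(G)$; it is minimal if no proper subset is dominating. For a dominating set $D$ and $x\in D$, a vertex $y$ is private for $x$ if $y\in N[x]\setminus N[D\setminus\{x\}]$; $P_D[x]$ is the set of such $y$ and $P_D(x)=P_D[x]\cap N(x)$. Fix an order $v_1,\ldots,v_n$ of $V(G)$. Greedy removal from a dominating set $D'$: while the current set $S$ is not a minimal dominating set, remove from $S$ the vertex $v_i$ of smallest index $i$ such that $S\setminus\{v_i\}$ is still dominating. Given $D,u,v$: $X_{uv}$ is built by starting from $\emptyset$ and repeatedly adding the smallest-index vertex of $P_D(u)\setminus N[\{v\}\cup X_{uv}]$ while this set is nonempty (so $X_{uv}$ is a maximal independent set of $G[P_D(u)\setminus N[v]]$). Let $D'=(D\setminus\{u\})\cup X_{uv}\cup\{v\}$ (a dominating set), let $D^*$ be the result of greedy removal from $D'$, and $Z_{uv}=D'\setminus D^*$. *)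

(* Vertices are 'I_n; the vertex order v_1,...,v_n is the
   natural order of 'I_n (index of v_{i+1} is i). A simple graph is a
   symmetric irreflexive relation e on 'I_n. *)
From mathcomp Require Import all_boot all_order.
Set Implicit Arguments. Unset Strict Implicit. Unset Printing Implicit Defensive.

Section Dom.
Variable n : nat.
Variable e : rel 'I_n.

Definition simple_graph := symmetric e /\ irreflexive e.

Definition Nopen (x : 'I_n) : {set 'I_n} := [set y | e x y].
Definition Nclosed (x : 'I_n) : {set 'I_n} := x |: Nopen x.
Definition NS (S : {set 'I_n}) : {set 'I_n} := \bigcup_(x in S) Nclosed x.

Definition dominating (D : {set 'I_n}) : bool := NS D == [set: 'I_n].
Definition minimal_dominating (D : {set 'I_n}) : bool :=
  dominating D && [forall S : {set 'I_n}, (S \proper D) ==> ~~ dominating S].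

Definition privC (D : {set 'I_n}) (x : 'I_n) : {set 'I_n} :=
  Nclosed x :\: NS (D :\ x).
Definition privO (D : {set 'I_n}) (x : 'I_n) : {set 'I_n} :=
  privC D x :&: Nopen x.

Definition removable (S : {set 'I_n}) (i : 'I_n) : bool :=
  (i \in S) && dominating (S :\ i).
Definition greedy_step (S : {set 'I_n}) : {set 'I_n} :=
  if minimal_dominating S then S else
  match [pick i | removable S i & [forall j, removable S j ==> (i <= j)]] with
  | Some i => S :\ i
  | None => S
  end.
(* the loop runs at most n times since each step removes a vertex *)
Definition greedy_removal (S : {set 'I_n}) : {set 'I_n} := iter n greedy_step S.

Definition Xcand (D : {set 'I_n}) (u v : 'I_n) (X : {set 'I_n}) : {set 'I_n} :=
  privO D u :\: NS (v |: X).
Definition X_step (D : {set 'I_n}) (u v : 'I_n) (X : {set 'I_n}) : {set 'I_n} :=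
  match [pick i | (i \in Xcand D u v X) &
                  [forall j, (j \in Xcand D u v X) ==> (i <= j)]] with
  | Some i => i |: X
  | None => X
  end.
Definition X_uv (D : {set 'I_n}) (u v : 'I_n) : {set 'I_n} :=
  iter n (X_step D u v) set0.

Definition D'_uv (D : {set 'I_n}) (u v : 'I_n) : {set 'I_n} :=
  ((D :\ u) :|: X_uv D u v) :|: [set v].
Definition Dstar_uv (D : {set 'I_n}) (u v : 'I_n) : {set 'I_n} :=
  greedy_removal (D'_uv D u v).
Definition Z_uv (D : {set 'I_n}) (u v : 'I_n) : {set 'I_n} :=
  D'_uv D u v :\: Dstar_uv D u v.

Definition induced_edges (S : {set 'I_n}) : nat :=
  #|[set p : 'I_n * 'I_n | [&& p.1 < p.2, e p.1 p.2, p.1 \in S & p.2 \in S]]|.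

Definition isolated_in (S : {set 'I_n}) (v : 'I_n) : bool :=
  (v \in S) && [forall y, (y \in S) ==> ~~ e v y].

End Dom.

(* Since v is private for u, the vertices of X_uv and v are private
   neighbours of u, and they form an independent set; hence each of them is
   isolated in G[D'], where D' = (D - u) + X_uv + v.  Maximality of X_uv
   makes D' dominating.  Greedy removal never deletes an isolated vertex
   (nothing else dominates it), so they all survive in D*, and every edge of
   G[D*] already lies in G[D - u], which misses the edge uw of G[D]. *)
From mathcomp Require Import all_boot all_order.
Set Implicit Arguments. Unset Strict Implicit. Unset Printing Implicit Defensive.

Lemma iter_fixpoint (T : Type) (f : T -> T) (m : T -> nat) k x :
  (forall y, f y = y \/ m (f y) < m y) -> m x <= k ->
  f (iter k f x) = iter k f x.
Proof.
move=> fP; elim: k x => [|k IH] x mx.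
  by case: (fP x) => // /leq_trans /(_ mx).
case: (fP x) => [fx | lt]; first by rewrite !iter_fix.
by rewrite iterSr; apply: IH; rewrite -ltnS (leq_trans lt).
Qed.

Lemma iter_invariant (T : Type) (P : T -> Prop) (f : T -> T) k x :
  (forall y, P y -> P (f y)) -> P x -> P (iter k f x).
Proof. by move=> fP Px; elim: k => //= k; apply: fP. Qed.

Lemma exists_least n (P : pred 'I_n) i0 :
  P i0 -> exists i, P i && [forall j, P j ==> (i <= j)].
Proof.
move=> Pi0; case: (arg_minnP val Pi0) => i Pi imin.
by exists i; rewrite Pi; apply/forallP => j; apply/implyP; apply: imin.
Qed.

Section Domination.
Variables (n : nat) (e : rel 'I_n).
Hypotheses (esym : symmetric e) (eirr : irreflexive e).
Implicit Types (S T P D X : {set 'I_n}) (x y u v : 'I_n).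

Lemma NSP S y : reflect (exists2 x, x \in S & (y == x) || e x y) (y \in NS e S).
Proof.
by apply: (iffP bigcupP) => -[x xS yx]; exists x; move: yx; rewrite ?inE.
Qed.

Lemma mem_NS S x : x \in S -> x \in NS e S.
Proof. by move=> xS; apply/NSP; exists x; rewrite ?eqxx. Qed.

Lemma adj_NS S x y : x \in S -> e x y -> y \in NS e S.
Proof. by move=> xS exy; apply/NSP; exists x; rewrite ?exy ?orbT. Qed.

Lemma NSS S T : S \subset T -> NS e S \subset NS e T.
Proof.
move=> ST; apply/subsetP => y /NSP [x xS yx].
by apply/NSP; exists x; rewrite ?(subsetP ST).
Qed.

Lemma dominatingP S : reflect (forall y, y \in NS e S) (dominating e S).
Proof.
apply: (iffP eqP) => [-> y | NS_T]; first by rewrite inE.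
by apply/setP => y; rewrite inE NS_T.
Qed.

Lemma dominatingS S T : S \subset T -> dominating e S -> dominating e T.
Proof. by move=> /NSS ST /dominatingP dS; apply/dominatingP => y; apply: (subsetP ST). Qed.

Lemma isolated_inS S T x :
  T \subset S -> x \in T -> isolated_in e S x -> isolated_in e T x.
Proof.
move=> TS xT /andP [_ /forallP xiso]; rewrite /isolated_in xT.
by apply/forallP => y; apply/implyP => yT; apply: (implyP (xiso y)); apply: (subsetP TS).
Qed.

Lemma isolated_not_removable S x : isolated_in e S x -> ~~ removable e S x.
Proof.
case/andP => _ /forallP xiso; apply/andP => -[_ /dominatingP /(_ x) /NSP [y]].
rewrite !inE eq_sym => /andP [/negbTE -> yS] /= eyx.
by move: (implyP (xiso y) yS); rewrite esym eyx.
Qed.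

Lemma greedy_step_sub S : greedy_step e S \subset S.
Proof. by rewrite /greedy_step; case: ifP => // _; case: pickP => // i _; apply: subD1set. Qed.

Lemma greedy_step_dominating S : dominating e S -> dominating e (greedy_step e S).
Proof. by rewrite /greedy_step; case: ifP => // _; case: pickP => // i /andP [/andP []]. Qed.

Lemma greedy_step_shrinks S : greedy_step e S = S \/ #|greedy_step e S| < #|S|.
Proof.
rewrite /greedy_step; case: ifP => _; first by left.
case: pickP => [i /andP [/andP [iS _] _] | _]; last by left.
by right; rewrite (cardsD1 i S) iS.
Qed.

Lemma exists_removable S :
  dominating e S -> ~~ minimal_dominating e S -> exists i, removable e S i.
Proof.
rewrite /minimal_dominating => -> /= /forallPn [T]; rewrite negb_imply negbK.
case/andP => /properP [TS [x xS xT]] dT; exists x; rewrite /removable xS.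
by apply: dominatingS dT; rewrite subsetD1 TS.
Qed.

Lemma greedy_step_fixed_minimal S :
  dominating e S -> greedy_step e S = S -> minimal_dominating e S.
Proof.
move=> dS; apply: contra_eqT => nmin; rewrite /greedy_step (negbTE nmin).
have [i0 ri0] := exists_removable dS nmin.
case: pickP => [i /andP [/andP [iS _] _] | none].
  by apply/eqP => /setP /(_ i); rewrite !inE eqxx iS.
by have [i] := exists_least ri0; rewrite none.
Qed.

Lemma greedy_removal_sub S : greedy_removal e S \subset S.
Proof.
apply: (@iter_invariant _ (fun T => T \subset S)) => // T TS.
exact: subset_trans (greedy_step_sub _) TS.
Qed.

Lemma greedy_removal_minimal S :
  dominating e S -> minimal_dominating e (greedy_removal e S).
Proof.
move=> dS; apply: greedy_step_fixed_minimal.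
  exact: iter_invariant greedy_step_dominating dS.
apply: iter_fixpoint; first exact: greedy_step_shrinks.
by rewrite -[n in _ <= n]card_ord max_card.
Qed.

Lemma greedy_removal_isolated S x :
  isolated_in e S x -> isolated_in e (greedy_removal e S) x.
Proof.
apply: (@iter_invariant _ (isolated_in e ^~ x)) => {}S xiso.
have xrem := negbTE (isolated_not_removable xiso); have /andP [xS _] := xiso.
apply: isolated_inS (greedy_step_sub _) _ xiso.
rewrite /greedy_step; case: ifP => // _; case: pickP => // i /andP [ri _].
by rewrite !inE xS andbT; apply: contraTneq ri => xi; rewrite -xi xrem.
Qed.

Definition induced_edge_set S : {set 'I_n * 'I_n} :=
  [set p : 'I_n * 'I_n | [&& p.1 < p.2, e p.1 p.2, p.1 \in S & p.2 \in S]].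

Lemma induced_edgesE S : induced_edges e S = #|induced_edge_set S|.
Proof. by []. Qed.

Lemma induced_edgesS S T : S \subset T -> induced_edges e S <= induced_edges e T.
Proof.
move=> ST; rewrite !induced_edgesE; apply/subset_leq_card/subsetP => p.
by rewrite !inE => /and4P [-> -> /(subsetP ST) -> /(subsetP ST) ->].
Qed.

Lemma induced_edges_isolatedU S P :
  {in P, forall x, isolated_in e (S :|: P) x} ->
  induced_edges e (S :|: P) = induced_edges e S.
Proof.
move=> Piso; rewrite !induced_edgesE; apply: eq_card => p; rewrite !inE.
apply/and4P/and4P => -[lt ep p1 p2]; last by rewrite lt ep p1 p2.
split=> //.
- case/orP: p1 => // /Piso /andP [_ /forallP /(_ p.2)].
  by rewrite inE p2 ep.
- case/orP: p2 => // /Piso /andP [_ /forallP /(_ p.1)].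
  by rewrite inE p1 esym ep.
Qed.

Lemma induced_edges_setD1 D u w :
  u \in D -> w \in D -> e u w -> induced_edges e (D :\ u) < induced_edges e D.
Proof.
move=> uD wD euw; rewrite !induced_edgesE; apply/proper_card/properP; split.
  by apply/subsetP => p; rewrite !inE => /and4P [-> -> /andP [_ ->] /andP [_ ->]].
have [uw | wu | /val_inj uw] := ltngtP u w; last by rewrite uw eirr in euw.
- by exists (u, w); rewrite !inE /= ?uw ?euw ?uD ?wD ?eqxx ?andbF.
- by exists (w, u); rewrite !inE /= ?wu 1?esym ?euw ?uD ?wD ?eqxx ?andbF.
Qed.

Lemma privO_notin_NS D u x : x \in privO e D u -> x \notin NS e (D :\ u).
Proof. by rewrite !inE => /andP [/andP []]. Qed.

Lemma privO_nadj D u x y : x \in privO e D u -> y \in D :\ u -> ~~ e y x.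
Proof. by move=> /privO_notin_NS xN yD; apply: contra xN; apply: adj_NS. Qed.

Lemma private_isolated D u P x :
  P \subset privO e D u -> {in P &, forall y z, ~~ e y z} -> x \in P ->
  isolated_in e ((D :\ u) :|: P) x.
Proof.
move=> Ppriv Pind xP; rewrite /isolated_in inE xP orbT /=.
apply/forallP => y; apply/implyP; rewrite inE => /orP [yD | yP]; last exact: Pind.
by rewrite esym; apply: privO_nadj yD; apply: (subsetP Ppriv).
Qed.

Lemma independent_setU1 S x :
  {in S &, forall y z, ~~ e y z} -> x \notin NS e S ->
  {in x |: S &, forall y z, ~~ e y z}.
Proof.
move=> Sind xN y z; rewrite !inE => /orP [/eqP -> | yS] /orP [/eqP -> | zS].
- by rewrite eirr.
- by rewrite esym; apply: contra xN; apply: adj_NS.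
- by apply: contra xN; apply: adj_NS.
- exact: Sind.
Qed.

Lemma X_step_invariant D u v X :
  X \subset privO e D u -> {in v |: X &, forall y z, ~~ e y z} ->
  X_step e D u v X \subset privO e D u /\
  {in v |: X_step e D u v X &, forall y z, ~~ e y z}.
Proof.
move=> Xpriv Xind; rewrite /X_step; case: pickP => // i /andP [].
rewrite inE => /andP [iN ipriv] _; rewrite setUCA subUset sub1set ipriv Xpriv.
by split=> //; apply: independent_setU1.
Qed.

Lemma X_uv_invariant D u v : v \in privO e D u ->
  X_uv e D u v \subset privO e D u /\
  {in v |: X_uv e D u v &, forall y z, ~~ e y z}.
Proof.
move=> vpriv; apply: (@iter_invariant _ (fun X => X \subset privO e D u /\
  {in v |: X &, forall y z, ~~ e y z})) => [X [] | ]; first exact: X_step_invariant.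
by rewrite sub0set setU0; split=> // y z /set1P -> /set1P ->; rewrite eirr.
Qed.

Lemma X_step_grows D u v X :
  X_step e D u v X = X \/ #|~: X_step e D u v X| < #|~: X|.
Proof.
rewrite /X_step; case: pickP => [i /andP [iC _] | _]; last by left.
have iX : i \notin X.
  move: iC; rewrite inE => /andP [iN _]; apply: contra iN => iX.
  by rewrite mem_NS // inE iX orbT.
right; apply/proper_card/properP; split; first by rewrite setCS subsetUr.
by exists i; rewrite !inE ?eqxx.
Qed.

Lemma privO_sub_NS_X_uv D u v : privO e D u \subset NS e (v |: X_uv e D u v).
Proof.
have Xfix : X_step e D u v (X_uv e D u v) = X_uv e D u v.
  apply: iter_fixpoint; first exact: X_step_grows.
  by rewrite -[n in _ <= n]card_ord max_card.
rewrite -setD_eq0 -/(Xcand e D u v _); apply/eqP.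
case: (set_0Vmem (Xcand e D u v (X_uv e D u v))) => [// | [i iC]].
move: Xfix; rewrite /X_step; case: pickP => [k /andP [kC _] | none].
  move/setP/(_ k); rewrite in_setU1 eqxx /= => kX.
  by move: kC; rewrite inE mem_NS // inE -kX orbT.
by have [j] := exists_least (P := mem (Xcand e D u v _)) iC; rewrite none.
Qed.

Lemma dominating_exchange D u T :
  dominating e D -> u \in NS e (D :\ u) -> privO e D u \subset NS e T ->
  dominating e ((D :\ u) :|: T).
Proof.
move=> /dominatingP dD uN privT; apply/dominatingP => y.
have [yN | yN] := boolP (y \in NS e (D :\ u)).
  by apply: (subsetP (NSS (subsetUl _ _))).
apply: (subsetP (NSS (subsetUr _ _))); apply: (subsetP privT).
have [x xD yx] := NSP _ _ (dD y).
have xu : x = u.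
  by apply/eqP; apply: contraNT yN => xu; apply/NSP; exists x; rewrite ?inE ?xu.
have yu : y != u by apply: contraNneq yN => ->.
move: yx; rewrite xu (negbTE yu) /= => euy.
by rewrite /privO /privC /Nclosed /Nopen !inE yN euy orbT.
Qed.

End Domination.

Theorem lemma1 (n : nat) (e : rel 'I_n) (D : {set 'I_n}) (u w v : 'I_n) :
  simple_graph e ->
  minimal_dominating e D ->
  u \in D -> w \in D -> e u w ->
  v \in privO e D u ->
  [/\ minimal_dominating e (Dstar_uv e D u v),
      X_uv e D u v :|: [set v] \subset Dstar_uv e D u v,
      induced_edges e (Dstar_uv e D u v) < induced_edges e D
    & isolated_in e (Dstar_uv e D u v) v].
Proof.
move=> [esym eirr] /andP [dD _] uD wD euw vpriv.
have D'E : D'_uv e D u v = (D :\ u) :|: (v |: X_uv e D u v).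
  by rewrite /D'_uv -setUA [X_uv _ _ _ _ :|: _]setUC.
have [Xpriv Xind] := X_uv_invariant esym eirr vpriv.
have Piso : {in v |: X_uv e D u v, forall x, isolated_in e (D'_uv e D u v) x}.
  move=> x xP; rewrite D'E; apply: private_isolated => //.
  by rewrite subUset sub1set vpriv.
have wDu : w \in D :\ u.
  by rewrite !inE wD andbT; apply: contraTneq euw => ->; rewrite eirr.
have dD' : dominating e (D'_uv e D u v).
  rewrite D'E; apply: dominating_exchange => //; last exact: privO_sub_NS_X_uv.
  by apply: adj_NS wDu _; rewrite esym.
have Dstar_iso x : x \in v |: X_uv e D u v -> isolated_in e (Dstar_uv e D u v) x.
  by move=> /Piso; apply: greedy_removal_isolated.
split.
- exact: greedy_removal_minimal.
- by apply/subsetP => x; rewrite setUC => /Dstar_iso /andP [].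
- apply: leq_ltn_trans (induced_edgesS _ (greedy_removal_sub _ _)) _.
  by rewrite D'E induced_edges_isolatedU -?D'E //; apply: induced_edges_setD1 wD euw.
- by apply: Dstar_iso; rewrite !inE eqxx.
Qed.
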